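(* Let $\pi$ be uniform on $\mathrm{PF}_n$ and let $R(\pi)=\#\{1\le i\le n-1:\pi_i=\pi_{i+1}\}$ be the number of repeats. Then for each fixed integer $j\ge0$, $P(R(\pi)=j)\to \frac{1}{e\,j!}$ as $n\to\infty$.
   Context: A parking function of length $n$ is a sequence $(\pi_1,\dots,\pi_n)$ with $1\le\pi_i\le n$ such that $\#\{t:\pi_t\le i\}\ge i$ for all $1\le i\le n$; $\mathrm{PF}_n$ denotes the set of these. *)

From mathcomp Require Import all_boot.
Set Implicit Arguments. Unset Strict Implicit. Unset Printing Implicit Defensive.

(* A sequence (pi_1,...,pi_n) with 1 <= pi_i <= n is encoded as
   f : {ffun 'I_n -> 'I_n.+1} (position t : 'I_n stands for index t+1,
   value f t in {0..n}, required to be >= 1). *)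
Definition is_parking (n : nat) (f : {ffun 'I_n -> 'I_n.+1}) : bool :=
  [forall t, 0 < val (f t)] &&
  [forall i : 'I_n.+1, (0 < val i) ==> (val i <= #|[set t | val (f t) <= val i]|)].

Definition repeats (n : nat) (f : {ffun 'I_n -> 'I_n.+1}) : nat :=
  #|[set i : 'I_n | [exists k : 'I_n, (val k == (val i).+1) && (f k == f i)]]|.

Definition pf_count (n : nat) : nat := #|[set f : {ffun 'I_n -> 'I_n.+1} | is_parking f]|.

Definition pf_rep_count (n j : nat) : nat :=
  #|[set f : {ffun 'I_n -> 'I_n.+1} | is_parking f && (repeats f == j)]|.

(* Pollak's cyclic argument.  Read a sequence of length n as a function into
   Z/(n+1), value 0 being the forbidden one, and let r in Z/(n+1) act by
   subtracting r from every value.  Exactly one of the n+1 shifts of any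
   sequence is a parking function: with C(k) the number of values below k,
   the shift by r parks iff r+1 is the first minimiser of C(k) - k on
   [1, n+1].  Shifting preserves repeats, so dividing by n+1 the counts of
   all sequences gives |PF_n| = (n+1)^(n-1) and C(n-1, j) n^(n-1-j) parking
   functions with j repeats (a sequence with j repeats has a free first
   value, j positions repeating their predecessor and n-1-j positions
   differing from it).  The ratio (n-1)^_j / (j! n^j) * (1 + 1/n)^-(n-1)
   tends to 1/(e j!). *)

From Stdlib Require Import Reals Factorial Lra.
From Coquelicot Require Import Coquelicot.
From mathcomp Require Import all_boot zify.
Set Implicit Arguments. Unset Strict Implicit. Unset Printing Implicit Defensive.
Open Scope nat_scope.

Definition subm (N x r : nat) : nat := (x + N - r) %% N.

Lemma submE N x r : x < N -> r < N ->
  subm N x r = if r <= x then x - r else x + N - r.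
Proof.
rewrite /subm => Hx Hr; case: leqP => Hrx.
  by rewrite -addnBAC // modnDr modn_small //; lia.
by rewrite modn_small //; lia.
Qed.

Lemma subm_inj N r x y : x < N -> y < N -> r < N ->
  subm N x r = subm N y r -> x = y.
Proof. by move=> Hx Hy Hr; rewrite !submE //; case: (leqP r x); case: (leqP r y); lia. Qed.

Lemma leq_subm_indicator N x r L : x < N -> r < N -> L < N ->
  (subm N x r <= L) + (x < r) = (x < L + r + 1) + (x < L + r + 1 - N).
Proof.
move=> Hx Hr HL; rewrite submE //.
case: (leqP r x) => H1; case: (leqP _ L) => H2;
  case: (ltnP x (L + r + 1)) => H3; case: (ltnP x (L + r + 1 - N)) => H4 //=; lia.
Qed.

Lemma card_set_sum (T : finType) (P : pred T) : #|[set t | P t]| = \sum_t P t.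
Proof. by rewrite -sum1_card big_mkcond /=; apply: eq_bigr => t _; rewrite inE; case: (P t). Qed.

Section CyclicLemma.
Variable n : nat.
Local Notation N := n.+1.
Local Notation seqT := {ffun 'I_n -> 'I_n.+1}.

Definition cshift (r : 'I_N) (g : seqT) : seqT :=
  [ffun t => @Ordinal N (subm N (g t) r) (ltn_pmod _ (ltn0Sn n))].

Lemma cshiftE r g t : val (cshift r g t) = subm N (g t) r.
Proof. by rewrite ffunE. Qed.

Lemma eq_cshift r g k i : (cshift r g k == cshift r g i) = (g k == g i).
Proof.
apply/eqP/eqP => [E|E]; last by rewrite !ffunE E.
by apply: val_inj; apply: (@subm_inj N r); rewrite ?ltn_ord // -!cshiftE E.
Qed.

Lemma cshift_inj r : injective (cshift r).
Proof.
move=> g1 g2 E; apply/ffunP => t; apply: val_inj.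
by apply: (@subm_inj N r); rewrite ?ltn_ord // -!cshiftE E.
Qed.

Lemma repeats_cshift r g : repeats (cshift r g) = repeats g.
Proof.
apply: eq_card => i; rewrite !inE.
by apply: eq_existsb => k; rewrite eq_cshift.
Qed.

Definition count_lt (g : seqT) (k : nat) : nat := \sum_t (val (g t) < k).

Lemma count_lt0 g : count_lt g 0 = 0.
Proof. by rewrite /count_lt big1. Qed.

Lemma count_lt_max g k : count_lt g k <= n.
Proof.
rewrite /count_lt -[leqRHS]card_ord -sum1_card.
by apply: leq_sum => t _; case: (_ < _).
Qed.

Lemma count_ltN g k : N <= k -> count_lt g k = n.
Proof.
move=> Hk; rewrite /count_lt -[RHS]card_ord -sum1_card.
by apply: eq_bigr => t _; rewrite (leq_trans (ltn_ord (g t)) Hk).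
Qed.

Lemma leq_count_lt g k1 k2 : k1 <= k2 -> count_lt g k1 <= count_lt g k2.
Proof. by move=> H; apply: leq_sum => t _; do 2 case: ltnP => //; lia. Qed.

Lemma card_cshift_leq r g L : L < N ->
  #|[set t | val (cshift r g t) <= L]| + count_lt g r =
  count_lt g (L + r + 1) + count_lt g (L + r + 1 - N).
Proof.
move=> HL; rewrite card_set_sum /count_lt -!big_split /=; apply: eq_bigr => t _.
by rewrite cshiftE leq_subm_indicator.
Qed.

Lemma cshift_pos r g : [forall t, 0 < cshift r g t] <-> count_lt g r.+1 = count_lt g r.
Proof.
have := card_cshift_leq r g (ltn0Sn n); rewrite add0n.
have -> : r + 1 - N = 0 by have := ltn_ord r; lia.
rewrite count_lt0 addn0 addn1 => E.
have -> : [forall t, 0 < cshift r g t] = (#|[set t | val (cshift r g t) <= 0]| == 0).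
  rewrite cards_eq0; apply/forallP/eqP => [H|H].
    by apply/setP => t; rewrite !inE leqn0 eqn0Ngt H.
  move=> t; have : t \notin [set t | val (cshift r g t) <= 0] by rewrite H inE.
  by rewrite inE leqn0 lt0n.
by split => [/eqP H|H]; [rewrite H in E | apply/eqP]; lia.
Qed.

Lemma parking_cshiftP r g : is_parking (cshift r g) <->
  count_lt g r.+1 = count_lt g r /\
  forall L, 0 < L < N ->
    L + count_lt g r <= count_lt g (L + r + 1) + count_lt g (L + r + 1 - N).
Proof.
split.
  move=> /andP [/cshift_pos H0 /forallP HL]; split => // L /andP [L0 LN].
  rewrite -card_cshift_leq // leq_add2r.
  by have /implyP := HL (Ordinal LN); apply.
move=> [H0 HL]; apply/andP; split; first exact/cshift_pos.
apply/forallP => L; apply/implyP => L0.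
rewrite -(leq_add2r (count_lt g r)) card_cshift_leq ?ltn_ord //.
by apply: HL; rewrite L0 ltn_ord.
Qed.

(* [r.+1] is the first minimiser of [k |-> count_lt g k - k] over [1, N],
   stated without subtraction. *)
Definition first_min_at (g : seqT) (r : nat) : Prop :=
  (forall k, 0 < k -> k <= r -> count_lt g r.+1 + k < count_lt g k + r.+1) /\
  (forall k, r.+1 < k -> k <= N -> count_lt g r.+1 + k <= count_lt g k + r.+1).

Lemma first_min_at_cshift_parking r g : is_parking (cshift r g) -> first_min_at g r.
Proof.
have Hr := ltn_ord r.
move=> /parking_cshiftP [H0 HL]; rewrite /first_min_at H0; split => k Hk1 Hk2.
- have := HL (k + N - r - 1); rewrite (@count_ltN g (k + N - r - 1 + r + 1)); last by lia.
  have -> : k + N - r - 1 + r + 1 - N = k by lia.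
  by move=> /(_ ltac:(lia)); lia.
- have := HL (k - r - 1); have -> : k - r - 1 + r + 1 - N = 0 by lia.
  have -> : k - r - 1 + r + 1 = k by lia.
  by rewrite count_lt0 => /(_ ltac:(lia)); lia.
Qed.

Lemma cshift_parking_first_min_at (r : 'I_N) g : first_min_at g r -> is_parking (cshift r g).
Proof.
have Hr := ltn_ord r.
move=> [F1 F2]; have H0 : count_lt g r.+1 = count_lt g r.
  case: (posnP r) => [Hr0|Hr0]; last first.
    by have := F1 r Hr0 (leqnn r); have := leq_count_lt g (leqnSn r); lia.
  rewrite Hr0 count_lt0; case: (posnP n) => [Hn|Hn]; first by rewrite count_ltN; lia.
  by have := F2 N; rewrite (@count_ltN g N) // Hr0; lia.
apply/parking_cshiftP; split => // L /andP [L0 LN].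
case: (leqP (L + r + 1) N) => HLr.
  have -> : L + r + 1 - N = 0 by lia.
  by rewrite count_lt0; have := F2 (L + r + 1); lia.
rewrite (@count_ltN g (L + r + 1)); last by lia.
by have := F1 (L + r + 1 - N); lia.
Qed.

Lemma first_min_at_unique g (r1 r2 : 'I_N) : first_min_at g r1 -> first_min_at g r2 -> r1 = r2.
Proof.
move=> [A1 B1] [A2 B2]; apply: ord_inj; apply/eqP; rewrite eqn_leq.
have h1 := ltn_ord r1; have h2 := ltn_ord r2.
apply/andP; split; rewrite leqNgt; apply/negP => H.
  by have := A1 r2.+1 (ltn0Sn _) H; have := B2 r1.+1; lia.
by have := A2 r1.+1 (ltn0Sn _) H; have := B1 r2.+1; lia.
Qed.

Lemma first_min_at_exists g : exists r : 'I_N, first_min_at g r.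
Proof.
pose V k := count_lt g k + N - k.
have [k1 k1_pos k1_min] :
    exists2 k1 : 'I_N.+1, 0 < k1 & forall k : 'I_N.+1, 0 < k -> V k1 <= V k.
  by case: (@arg_minnP _ ord_max (fun k : 'I_N.+1 => 0 < k) V) => // k1; exists k1.
have [|k0 /andP [/andP [k0_pos k0_le] /eqP k0_min] k0_first] :=
  ex_minnP (ex_intro (fun k => (0 < k) && (k <= N) && (V k == V k1)) (val k1) _).
  by rewrite k1_pos -ltnS ltn_ord eqxx.
have Hr : k0.-1 < N by lia.
exists (Ordinal Hr); rewrite /first_min_at /= prednK //.
have V_min k : 0 < k -> k <= N -> V k0 <= V k.
  by move=> k_pos k_le; rewrite k0_min (k1_min (Ordinal (k_le : k < N.+1))).
have V_bound k : count_lt g k <= n := count_lt_max g k.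
split => k k_pos k_le.
- have k_lt : V k != V k0.
    by apply/eqP => E; have := k0_first k; rewrite k_pos E k0_min eqxx /=; lia.
  have := V_min k k_pos ltac:(lia); move: k_lt; rewrite /V.
  by have := V_bound k; have := V_bound k0; lia.
- have := V_min k ltac:(lia) k_le; rewrite /V.
  by have := V_bound k; have := V_bound k0; lia.
Qed.

Lemma card_parking_cshift g : #|[set r : 'I_N | is_parking (cshift r g)]| = 1.
Proof.
have [r0 H0] := first_min_at_exists g.
rewrite (_ : [set r | _] = [set r0]) ?cards1 //; apply/setP => r; rewrite !inE.
apply/idP/eqP => [/first_min_at_cshift_parking H | ->].
  exact: first_min_at_unique H H0.
exact: cshift_parking_first_min_at.
Qed.

Lemma sum_cshift_invariant (P : pred seqT) : (forall r g, P (cshift r g) = P g) ->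
  \sum_(g : seqT) P g = N * #|[set f | is_parking f && P f]|.
Proof.
move=> HP.
transitivity (\sum_(g : seqT) \sum_(r : 'I_N) (is_parking (cshift r g) && P g : nat)).
  apply: eq_bigr => g _.
  rewrite (eq_bigr (fun r => (is_parking (cshift r g) : nat) * P g)); last first.
    by move=> r _; case: (is_parking _); case: (P g).
  by rewrite -big_distrl /= -card_set_sum card_parking_cshift mul1n.
rewrite exchange_big /= (eq_bigr (fun _ => #|[set f | is_parking f && P f]|)).
  by rewrite sum_nat_const card_ord.
move=> r _; rewrite card_set_sum [RHS](reindex_inj (@cshift_inj r)) /=.
by apply: eq_bigr => g _; rewrite HP.
Qed.
End CyclicLemma.

Lemma sum_tuple_cons (T : finType) m (F : m.+1.-tuple T -> nat) :
  \sum_(t : m.+1.-tuple T) F t = \sum_(x : T) \sum_(t : m.-tuple T) F [tuple of x :: t].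
Proof.
rewrite (partition_big (@thead _ _) predT) //=; apply: eq_bigr => x _.
rewrite (reindex (fun t : m.-tuple T => [tuple of x :: t])) /=; last first.
  exists (fun t : m.+1.-tuple T => [tuple of behead t]) => [t _ | t /eqP <-].
    exact: val_inj.
  by rewrite -tuple_eta.
by apply: eq_bigl => t; rewrite theadE eqxx.
Qed.

Fixpoint seq_repeats (T : eqType) (s : seq T) : nat :=
  if s is x :: ((y :: _) as s') then (y == x) + seq_repeats s' else 0.

Lemma count_tuple_repeats (T : finType) m (x : T) j :
  \sum_(t : m.-tuple T) (seq_repeats (x :: t) == j) = 'C(m, j) * #|T|.-1 ^ (m - j).
Proof.
elim: m x j => [|m IH] x j.
  rewrite (eq_bigr (fun _ => (0 == j) : nat)); last by move=> t _; rewrite [t]tuple0.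
  by rewrite sum_nat_const card_tuple expn0 mul1n; case: j.
have repeat_x : \sum_(t : m.-tuple T) (seq_repeats (x :: [tuple of x :: t]) == j) =
    if j is j'.+1 then 'C(m, j') * #|T|.-1 ^ (m - j') else 0.
  case: j => [|j]; first by rewrite big1 // => t _; rewrite /= eqxx.
  by rewrite -(IH x); apply: eq_bigr => t _; rewrite /= eqxx.
have change_x y : y != x ->
    \sum_(t : m.-tuple T) (seq_repeats (x :: [tuple of y :: t]) == j) =
    'C(m, j) * #|T|.-1 ^ (m - j).
  by move=> /negbTE yx; rewrite -(IH y); apply: eq_bigr => t _; rewrite /= yx.
rewrite sum_tuple_cons (bigD1 x) // repeat_x (eq_bigr _ change_x) /= sum_nat_const cardC1.
case: j {repeat_x change_x} => [|j]; first by rewrite !bin0 !subn0 expnS add0n !mul1n.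
rewrite binS mulnDl; case: (ltngtP j m) => H.
- by rewrite subSS -(subnSK H) expnS addnC; congr (_ + _); exact: mulnCA.
- by rewrite !bin_small //; lia.
- by rewrite H (bin_small (ltnSn m)) binn !subnn !mul0n muln0 addn0 add0n.
Qed.

Lemma seq_repeatsE (T : eqType) (x0 : T) s :
  seq_repeats s = \sum_(i < size s) ((i.+1 < size s) && (nth x0 s i.+1 == nth x0 s i)).
Proof.
elim: s => [|x [|y s] IH]; first by rewrite big_ord0.
  by rewrite big_ord_recl big_ord0.
by rewrite [RHS]big_ord_recl -IH.
Qed.

Lemma repeats_tnth n (t : n.-tuple 'I_n.+1) : repeats [ffun i => tnth t i] = seq_repeats t.
Proof.
rewrite (seq_repeatsE ord0) /repeats card_set_sum size_tuple.
apply: eq_bigr => i _.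
case: existsP => [[k /andP [/eqP Hk]] | no_k].
  rewrite !ffunE => /eqP tk; have Hi : i.+1 < n by rewrite -Hk ltn_ord.
  by rewrite Hi -Hk -(tnth_nth ord0 t k) -(tnth_nth ord0 t i) tk eqxx.
case: (ltnP i.+1 n) => Hi //=; case: eqP => // E; case: no_k.
by exists (Ordinal Hi); rewrite !ffunE /= eqxx !(tnth_nth ord0) /= E.
Qed.

Lemma count_ffun_repeats m j :
  \sum_(g : {ffun 'I_m.+1 -> 'I_m.+2}) (repeats g == j) = m.+2 * ('C(m, j) * m.+1 ^ (m - j)).
Proof.
rewrite (reindex (fun t : m.+1.-tuple 'I_m.+2 => [ffun i => tnth t i])) /=; last first.
  exists (fun g : {ffun 'I_m.+1 -> 'I_m.+2} => [tuple g i | i < m.+1]) => [t _ | g _].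
    by apply: eq_from_tnth => i; rewrite tnth_mktuple ffunE.
  by apply/ffunP => i; rewrite ffunE tnth_mktuple.
rewrite (eq_bigr _ (fun t _ => congr1 (fun k => (k == j) : nat) (repeats_tnth t))).
rewrite sum_tuple_cons (eq_bigr _ (fun x _ => count_tuple_repeats m x j)).
by rewrite sum_nat_const !card_ord.
Qed.

Lemma pf_rep_countE m j : pf_rep_count m.+1 j = 'C(m, j) * m.+1 ^ (m - j).
Proof.
apply/eqP; rewrite -(eqn_pmul2l (ltn0Sn m.+1)) -count_ffun_repeats.
by rewrite (@sum_cshift_invariant m.+1 (fun g => repeats g == j)) // => r g; rewrite repeats_cshift.
Qed.

Lemma pf_countE m : pf_count m.+1 = m.+2 ^ m.
Proof.
have := @sum_cshift_invariant m.+1 predT (fun _ _ => erefl).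
rewrite sum1_card card_ffun !card_ord expnS => /eqP; rewrite eqn_pmul2l // => /eqP ->.
by apply: eq_card => f; rewrite !inE andbT.
Qed.

Open Scope R_scope.

Lemma INR_muln (a b : nat) : INR (a * b)%N = INR a * INR b.
Proof. by rewrite -multE mult_INR. Qed.

Lemma INR_expn (a b : nat) : INR (a ^ b)%N = INR a ^ b.
Proof. by elim: b => [|b IH] //; rewrite expnS INR_muln IH. Qed.

Lemma fact_factorial j : fact j = j`!.
Proof. by elim: j => [|j IH] //=; rewrite factS IH. Qed.

Lemma pow_exp x m : exp x ^ m = exp (INR m * x).
Proof. by rewrite -(Rpower_pow m _ (exp_pos x)) /Rpower ln_exp. Qed.

Lemma is_lim_seq_inv_INR_add b : 0 < b -> is_lim_seq (fun m => / (INR m + b)) 0.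
Proof.
move=> hb; have := is_lim_seq_inv (fun m => INR m + b) p_infty; apply => //.
exact: (is_lim_seq_plus _ _ p_infty b p_infty is_lim_seq_INR (is_lim_seq_const b)).
Qed.

Lemma is_lim_seq_ratio_INR_add a b : 0 < b ->
  is_lim_seq (fun m => (INR m + a) / (INR m + b)) 1.
Proof.
move=> hb; apply: (is_lim_seq_ext (fun m => 1 + (a - b) * / (INR m + b))).
  by move=> m; have hm := pos_INR m; field; lra.
have -> : Rbar.Finite 1 = Rbar.Finite (1 + (a - b) * 0) by f_equal; ring.
apply: is_lim_seq_plus'; first exact: is_lim_seq_const.
by apply: is_lim_seq_mult'; [exact: is_lim_seq_const | exact: is_lim_seq_inv_INR_add].
Qed.

Lemma one_add_inv_bounds x : 0 < x -> exp (/ (x + 1)) <= 1 + / x <= exp (/ x).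
Proof.
move=> hx; split; last by have := exp_ineq1_le (/ x); lra.
have hy : 0 < / (x + 1) < 1.
  split; first by apply: Rinv_0_lt_compat; lra.
  by rewrite -Rinv_1; apply: Rinv_lt_contravar; lra.
have h := exp_ineq1_le (- / (x + 1)); rewrite exp_Ropp in h.
have -> : 1 + / x = / (1 - / (x + 1)) by field; lra.
apply: (Rmult_le_reg_r (1 - / (x + 1))); first lra.
rewrite Rinv_l; last lra.
have := Rmult_le_compat_l (exp (/ (x + 1))) _ _ (Rlt_le _ _ (exp_pos _)) h.
by rewrite Rinv_r; [lra | have := exp_pos (/ (x + 1)); lra].
Qed.

Lemma is_lim_seq_one_add_inv_pow : is_lim_seq (fun m => (1 + / (INR m + 1)) ^ m) (exp 1).
Proof.
have cont_exp : continuity_pt exp 1 := derivable_continuous_pt _ _ (derivable_pt_exp 1).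
apply: (is_lim_seq_le_le (fun m => exp ((INR m + 0) / (INR m + 2)))
                         _ (fun m => exp ((INR m + 0) / (INR m + 1)))).
- move=> m; have hm := pos_INR m.
  have [lo hi] := one_add_inv_bounds (Rplus_le_lt_0_compat _ _ hm Rlt_0_1).
  rewrite /Rdiv !Rplus_0_r -!pow_exp (_ : INR m + 2 = INR m + 1 + 1); last ring.
  have exp_ge0 y : 0 <= exp y := Rlt_le _ _ (exp_pos y).
  by split; apply: pow_incr; split => //; apply: Rle_trans lo.
- apply: (is_lim_seq_continuous exp (fun m => (INR m + 0) / (INR m + 2))) => //.
  by apply: is_lim_seq_ratio_INR_add; lra.
- apply: (is_lim_seq_continuous exp (fun m => (INR m + 0) / (INR m + 1))) => //.
  by apply: is_lim_seq_ratio_INR_add; lra.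
Qed.

Lemma is_lim_seq_ffact_pow j :
  is_lim_seq (fun m => INR (m ^_ j) / (INR m + 1) ^ j) 1.
Proof.
elim: j => [|j IH].
  apply: (is_lim_seq_ext (fun _ => 1)); last exact: is_lim_seq_const.
  by move=> m; rewrite ffactn0 /=; field.
apply: (is_lim_seq_ext_loc
  (fun m => INR (m ^_ j) / (INR m + 1) ^ j * ((INR m + - INR j) / (INR m + 1)))).
  exists j => m /leP Hjm; have hm := pos_INR m.
  rewrite ffactnSr INR_muln -minusE minus_INR; last exact/leP.
  have hp := pow_lt (INR m + 1) j ltac:(lra).
  by rewrite /=; field; lra.
have -> : Rbar.Finite 1 = Rbar.Finite (1 * 1) by f_equal; ring.
by apply: is_lim_seq_mult'; [exact: IH | apply: is_lim_seq_ratio_INR_add; lra].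
Qed.

Lemma pf_rep_ratioE m j : (j <= m)%N ->
  INR (pf_rep_count m.+1 j) / INR (pf_count m.+1) =
  / INR (fact j) * (INR (m ^_ j) / (INR m + 1) ^ j) * / (1 + / (INR m + 1)) ^ m.
Proof.
move=> Hjm; have hm := pos_INR m.
rewrite pf_rep_countE pf_countE -bin_ffact -fact_factorial !INR_muln !INR_expn !S_INR.
have hf := INR_fact_neq_0 j.
have split_pow : (INR m + 1) ^ m = (INR m + 1) ^ (m - j) * (INR m + 1) ^ j.
  by rewrite -pow_add plusE subnK.
rewrite (_ : 1 + / (INR m + 1) = (INR m + 1 + 1) / (INR m + 1)); last by field; lra.
rewrite Rpow_mult_distr pow_inv split_pow.
have := pow_lt (INR m + 1) (m - j) ltac:(lra); have := pow_lt (INR m + 1) j ltac:(lra).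
have := pow_lt (INR m + 1 + 1) m ltac:(lra) => h1 h2 h3.
by field; lra.
Qed.

Theorem mainTheorem10 (j : nat) :
  Un_cv (fun n : nat => INR (pf_rep_count n j) / INR (pf_count n))
        (/ (exp 1 * INR (fact j))).
Proof.
apply/is_lim_seq_Reals/is_lim_seq_incr_1.
apply: (is_lim_seq_ext_loc (fun m => / INR (fact j) * (INR (m ^_ j) / (INR m + 1) ^ j)
                                       * / (1 + / (INR m + 1)) ^ m)).
  by exists j => m /leP Hjm; rewrite pf_rep_ratioE.
have := exp_pos 1; have := INR_fact_neq_0 j => hf he.
have -> : / (exp 1 * INR (fact j)) = / INR (fact j) * 1 * / exp 1 by field; lra.
apply: is_lim_seq_mult'.
  exact: is_lim_seq_mult' (is_lim_seq_const _) (is_lim_seq_ffact_pow j).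
apply: is_lim_seq_inv is_lim_seq_one_add_inv_pow _; case=> /=; lra.
Qed.
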